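(* Let $A=[a_{ij}]$ be the adjacency matrix of a strongly connected, aperiodic directed graph on $\mathcal X=\{1,\ldots,n\}$ with $a_{nn}=1$, and let $N\ge1$ be such that all entries of $A^N$ are positive. Let $\lambda_A$, $u,v>0$ with $A^Tu=\lambda_Au$, $Av=\lambda_Av$, $\sum_iu_iv_i=1$, $\nu_{RB}(i)=u_iv_i$, $r_{ij}=\frac{v_j}{\lambda_Av_i}a_{ij}$, and $\mathfrak M_{\rm RB}(x_0,\ldots,x_N)=\nu_{RB}(x_0)r_{x_0x_1}\cdots r_{x_{N-1}x_N}$. Let $\mathfrak M^*[\delta_1,\delta_n]$ be the minimizer of $\mathbb D(P\|\mathfrak M_{\rm RB})$ over all probability distributions $P$ on $\mathcal X^{N+1}$ whose marginal at time $0$ is the point mass at node $1$ and whose marginal at time $N$ is the point mass at node $n$. Then $\mathfrak M^*[\delta_1,\delta_n]$ assigns probability $1/(A^N)_{1n}$ to each of the feasible paths of length $N$ from $1$ to $n$, i.e. to each $(x_0,\ldots,x_N)$ with $x_0=1$, $x_N=n$ and $a_{x_tx_{t+1}}=1$ for $t=0,\ldots,N-1$.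
   Context: Relative entropy of a probability distribution $P$ with respect to a nonnegative measure $Q$ on a finite set: $\mathbb D(P\|Q)=\sum_x P(x)\log\frac{P(x)}{Q(x)}$ if $\mathrm{supp}(P)\subseteq\mathrm{supp}(Q)$ (with $0\log0=0$), and $+\infty$ otherwise. *)

From HB Require Import structures.
From mathcomp Require Import all_boot all_order all_algebra.
From mathcomp Require Import all_classical all_reals exp.
Set Implicit Arguments. Unset Strict Implicit. Unset Printing Implicit Defensive.
Import Order.TTheory GRing.Theory Num.Theory.
Local Open Scope ring_scope.

(* Nodes: 'I_n.+1 (= {1,...,n+1} shifted to {0,...,n}); node "1" is ord0,
   node "n" (the last node) is ord_max.  Paths of length N: functions
   'I_N.+1 -> 'I_n.+1 (times 0..N). *)

Definition path_t (n N : nat) := {ffun 'I_N.+1 -> 'I_n.+1}.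

Definition is_adjacency (R : numDomainType) n (A : 'M[R]_n.+1) :=
  forall i j, A i j = 0 \/ A i j = 1.

Definition strongly_connected (R : numDomainType) n (A : 'M[R]_n.+1) :=
  forall i j, exists k : nat, 0 < (A ^+ k) i j.

Definition aperiodic (R : numDomainType) n (A : 'M[R]_n.+1) :=
  forall (i : 'I_n.+1) (d : nat),
    (forall k : nat, (0 < k)%N -> 0 < (A ^+ k) i i -> (d %| k)%N) -> d = 1%N.

Definition is_prob (R : numDomainType) (T : finType) (P : {ffun T -> R}) :=
  (forall x, 0 <= P x) /\ \sum_(x : T) P x = 1.

Definition rel_entropy (R : realType) (T : finType) (P Q : {ffun T -> R})
  : \bar R :=
  if [forall x, (P x != 0) ==> (Q x != 0)]
  then (\sum_(x : T) (if P x == 0 then 0 else P x * ln (P x / Q x)))%:E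
  else +oo%E.

Definition M_RB (R : realType) n N (A : 'M[R]_n.+1) (lam : R)
  (u v : 'cV[R]_n.+1) : {ffun path_t n N -> R} :=
  [ffun x : path_t n N =>
     (u (x ord0) 0 * v (x ord0) 0) *
     \prod_(t < N) (v (x (inord t.+1)) 0 / (lam * v (x (inord t)) 0)
                      * A (x (inord t)) (x (inord t.+1)))].

Definition marginal (R : numDomainType) n N (P : {ffun path_t n N -> R})
  (t : 'I_N.+1) (i : 'I_n.+1) : R :=
  \sum_(x : path_t n N | x t == i) P x.

Definition bridge_feasible (R : numDomainType) n N
  (P : {ffun path_t n N -> R}) :=
  is_prob P /\
  (forall i, marginal P ord0 i = (i == ord0)%:R) /\
  (forall i, marginal P ord_max i = (i == ord_max)%:R).

Definition is_bridge_minimizer (R : realType) n N (Q P : {ffun path_t n N -> R}) :=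
  bridge_feasible P /\
  forall P' : {ffun path_t n N -> R}, bridge_feasible P' ->
    (rel_entropy P Q <= rel_entropy P' Q)%E.

Definition feasible_path (R : numDomainType) n N (A : 'M[R]_n.+1) (x : path_t n N) :=
  x ord0 = ord0 /\ x ord_max = ord_max /\
  forall t : 'I_N, A (x (inord t)) (x (inord t.+1)) = 1.

From HB Require Import structures.
From mathcomp Require Import all_boot all_order all_algebra.
From mathcomp Require Import all_classical all_reals exp.
From mathcomp Require Import ring lra.
Set Implicit Arguments. Unset Strict Implicit. Unset Printing Implicit Defensive.
Import Order.TTheory GRing.Theory Num.Theory.
Local Open Scope ring_scope.

(* Along a path from node 1 to node n the Ruelle-Bowen weight telescopes to
   u_1 v_n lam^-N prod_t a_(x_t x_(t+1)), so M_RB is a constant c > 0 on the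
   K = (A^N)_1n feasible paths and vanishes on every other path with these
   endpoints.  A distribution with the prescribed endpoint marginals and finite
   divergence from M_RB is therefore carried by the feasible paths, and for such
   P we have D(P || M_RB) = K^-1 sum_x phi(K P(x)) - ln (K c), where
   phi(z) = z ln z - (z - 1) is nonnegative and vanishes only at z = 1.  Hence
   the uniform distribution on the feasible paths is the unique minimizer. *)

Definition path_weight (R : pzSemiRingType) n N (A : 'M[R]_n.+1) (x : path_t n N) : R :=
  \prod_(t < N) A (x (inord t)) (x (inord t.+1)).

Definition path_snoc (T : finType) N (y : {ffun 'I_N.+1 -> T}) (k : T) :
    {ffun 'I_N.+2 -> T} :=
  [ffun t : 'I_N.+2 => if (t < N.+1)%N then y (inord t) else k].

Lemma path_snoc_bij (T : finType) N :
  bijective (fun p : {ffun 'I_N.+1 -> T} * T => path_snoc p.1 p.2).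
Proof.
exists (fun x : {ffun 'I_N.+2 -> T} => ([ffun t : 'I_N.+1 => x (inord t)], x ord_max)).
- move=> [y k] /=; congr pair; last by rewrite ffunE /= ltnn.
  apply/ffunP => t; rewrite !ffunE inordK ?ltn_ord ?inord_val //.
  by rewrite ltnS ltnW.
- move=> x; apply/ffunP => t; rewrite !ffunE.
  have [tN|Nt] := ltnP t N.+1; first by rewrite inordK // inord_val.
  congr (x _); apply: val_inj => /=.
  by apply/eqP; rewrite eqn_leq Nt -ltnS ltn_ord.
Qed.

Lemma path_snoc0 (T : finType) N (y : {ffun 'I_N.+1 -> T}) k :
  path_snoc y k ord0 = y ord0.
Proof. by rewrite ffunE /=; congr (y _); apply: val_inj; rewrite /= inordK. Qed.

Lemma path_snoc_max (T : finType) N (y : {ffun 'I_N.+1 -> T}) k :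
  path_snoc y k ord_max = k.
Proof. by rewrite ffunE /= ltnn. Qed.

Lemma path_weight_snoc (R : pzSemiRingType) n N (A : 'M[R]_n.+1) (y : path_t n N) k :
  path_weight A (path_snoc y k) = path_weight A y * A (y ord_max) k.
Proof.
rewrite /path_weight big_ord_recr /=; congr (_ * _).
  apply: eq_bigr => t _; have tN := ltn_ord t.
  by rewrite !ffunE !inordK ?ltnS 1?ltnW ?tN // ltnW.
rewrite !ffunE !inordK ?ltnn // ltnSn; congr (A (y _) _).
by apply: val_inj; rewrite /= inordK.
Qed.

Lemma sum_path_weight (R : pzSemiRingType) n N (A : 'M[R]_n.+1) (i j : 'I_n.+1) :
  \sum_(x : path_t n N | (x ord0 == i) && (x ord_max == j)) path_weight A x
    = (A ^+ N) i j.
Proof.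
elim: N j => [|N IH] j.
  have x0max (x : path_t n 0) : x ord_max = x ord0 by congr (x _); apply: val_inj.
  rewrite expr0 mxE; case: (eqVneq i j) => [<-|ij].
    rewrite (big_pred1 [ffun=> i]) /= ?/path_weight ?big_ord0 // => x.
    rewrite x0max andbb; apply/eqP/eqP => [<-|-> /[!ffunE] //].
    by apply/ffunP => t; rewrite ffunE (ord1 t).
  rewrite big_pred0 // => x; rewrite x0max.
  by case: eqP => // ->; rewrite (negbTE ij).
rewrite (reindex _ (onW_bij _ (path_snoc_bij _ N))) /=.
under eq_bigl do rewrite path_snoc0 path_snoc_max.
under eq_bigr do rewrite path_weight_snoc.
rewrite -(pair_big (fun y : path_t n N => y ord0 == i) (pred1 j)
  (fun y k => path_weight A y * A (y ord_max) k)) /=.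
under eq_bigr do rewrite big_pred1_eq.
rewrite (partition_big (fun y : path_t n N => y ord_max) predT) //=.
rewrite exprSr mxE; apply: eq_bigr => l _.
rewrite -IH big_distrl /=; apply: eq_bigr => y /andP[_ /eqP ->] //.
Qed.

Definition is_walk (R : pzSemiRingType) n N (A : 'M[R]_n.+1) (x : path_t n N) :=
  [forall t : 'I_N, A (x (inord t)) (x (inord t.+1)) == 1].

Definition walks (R : pzSemiRingType) n N (A : 'M[R]_n.+1) (i j : 'I_n.+1) :=
  [set x : path_t n N | [&& x ord0 == i, x ord_max == j & is_walk A x]].

Lemma path_weight_adjacency (R : numDomainType) n N (A : 'M[R]_n.+1) (x : path_t n N) :
  is_adjacency A -> path_weight A x = (is_walk A x)%:R.
Proof.
move=> adjA; have [/forallP walk_x|/forallPn[t At]] := boolP (is_walk A x).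
  by rewrite /path_weight big1 // => t _; apply/eqP.
rewrite /path_weight (bigD1 t) //=.
by case: (adjA (x (inord t)) (x (inord t.+1))) At => ->; rewrite ?eqxx ?mul0r.
Qed.

Lemma card_walks (R : numDomainType) n N (A : 'M[R]_n.+1) (i j : 'I_n.+1) :
  is_adjacency A -> #|walks N A i j|%:R = (A ^+ N) i j.
Proof.
move=> adjA; rewrite -sum_path_weight -sum1_card natr_sum big_mkcond [RHS]big_mkcond /=.
apply: eq_bigr => x _; rewrite inE path_weight_adjacency //.
by case: (_ == i); case: (_ == j); case: is_walk.
Qed.

Lemma prodf_telescope (R : fieldType) (f : nat -> R) N :
  (forall t, f t != 0) -> \prod_(t < N) (f t.+1 / f t) = f N / f 0.
Proof.
move=> f_neq0; elim: N => [|N IH]; first by rewrite big_ord0 divff.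
by rewrite big_ord_recr IH /= mulrC mulrA divfK.
Qed.

Lemma M_RBE (R : realType) n N (A : 'M[R]_n.+1) lam (u v : 'cV[R]_n.+1)
    (x : path_t n N) : (forall i, v i 0 != 0) ->
  M_RB N A lam u v x = u (x ord0) 0 * v (x ord_max) 0 / lam ^+ N * path_weight A x.
Proof.
move=> v_neq0; rewrite ffunE.
rewrite (eq_bigr (fun t : 'I_N => lam^-1 * (v (x (inord t.+1)) 0 / v (x (inord t)) 0)
                                  * A (x (inord t)) (x (inord t.+1)))); last first.
  by move=> t _; rewrite invfM mulrCA mulrA.
rewrite 2!big_split /= prodr_const card_ord.
have /= -> := prodf_telescope (f := fun t => v (x (inord t)) 0) N (fun _ => v_neq0 _).
have -> : x (inord 0) = x ord0 by congr (x _); apply: val_inj; rewrite /= inordK.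
have -> : x (inord N) = x ord_max by congr (x _); apply: val_inj; rewrite /= inordK.
rewrite exprVn /path_weight mulrA; congr (_ * _).
by rewrite [_^-1 * _]mulrC mulrA -(mulrA (u _ _)) (mulrC (v _ _)) divfK.
Qed.

Lemma mulmx_exp_eigen (R : comPzRingType) n (A : 'M[R]_n) lam (v : 'cV[R]_n) k :
  A *m v = lam *: v -> A ^+ k *m v = lam ^+ k *: v.
Proof.
move=> Av; elim: k => [|k IH]; first by rewrite !expr0 scale1r mul1mx.
by rewrite exprSr -mulmxE -mulmxA Av -scalemxAr IH scalerA exprSr mulrC.
Qed.

Lemma eigenvalue_gt0 (R : numDomainType) n (B : 'M[R]_n.+1) mu (v : 'cV[R]_n.+1) :
  (forall i j, 0 < B i j) -> (forall i, 0 < v i 0) -> B *m v = mu *: v -> 0 < mu.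
Proof.
move=> B_gt0 v_gt0 /(congr1 (fun w : 'cV_n.+1 => w ord0 0)); rewrite !mxE => Bv.
rewrite -(pmulr_lgt0 _ (v_gt0 ord0)) -Bv (bigD1 ord0) //=.
by rewrite ltr_pwDl ?mulr_gt0 // sumr_ge0 // => j _; rewrite mulr_ge0 ?ltW.
Qed.

Section XlnX.
Variable R : realType.
Implicit Types z : R.

Lemma ln_lt_subr1 z : 0 < z -> z != 1 -> ln z < z - 1.
Proof.
move=> z_gt0 z_neq1; have := @expR_gt1Dx R (ln z).
by rewrite ln_eq0 // lnK ?posrE // ltrBrDl addrC; apply.
Qed.

Lemma xlnx_gt_subr1 z : 0 < z -> z != 1 -> z - 1 < z * ln z.
Proof.
move=> z_gt0 z_neq1; have := @ln_lt_subr1 z^-1.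
rewrite invr_gt0 invr_eq1 => /(_ z_gt0 z_neq1).
by rewrite lnV ?posrE // -(ltr_pM2l z_gt0) mulrBr mulfV ?gt_eqF // mulr1 mulrN; lra.
Qed.

Lemma xlnx_ge_subr1 z : 0 <= z -> z - 1 <= z * ln z.
Proof.
rewrite le0r => /predU1P[->|z_gt0]; first by rewrite mul0r sub0r lerN10.
have [->|z_neq1] := eqVneq z 1; first by rewrite ln1 mulr0 subrr.
exact/ltW/xlnx_gt_subr1.
Qed.

Lemma xlnx_eq_subr1 z : 0 <= z -> z * ln z = z - 1 -> z = 1.
Proof.
rewrite le0r => /predU1P[->|z_gt0].
  by rewrite mul0r sub0r => /eqP; rewrite eq_sym oppr_eq0 oner_eq0.
by apply: contra_eq => z_neq1; rewrite gt_eqF // xlnx_gt_subr1.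
Qed.
End XlnX.

Definition unif_on (R : numFieldType) (T : finType) (S : {set T}) : {ffun T -> R} :=
  [ffun x => if x \in S then #|S|%:R^-1 else 0].

Lemma is_prob_unif_on (R : numFieldType) (T : finType) (S : {set T}) :
  (0 < #|S|)%N -> is_prob (unif_on R S).
Proof.
move=> S_gt0; split=> [x|]; first by rewrite ffunE; case: ifP; rewrite ?invr_ge0.
rewrite (eq_bigr _ (fun x _ => ffunE _ x)) -big_mkcond /= sumr_const.
by rewrite -(mulr_natr (#|S|%:R^-1)) mulVf // pnatr_eq0 -lt0n.
Qed.

Lemma rel_entropy_supp (R : realType) (T : finType) (P Q : {ffun T -> R}) x :
  rel_entropy P Q != +oo%E -> P x != 0 -> Q x != 0.
Proof.
by rewrite /rel_entropy; case: ifP => [/forallP/(_ x)/implyP|]; rewrite ?eqxx.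
Qed.

Section RelEntropyConstOn.
Variables (R : realType) (T : finType) (S : {set T}) (Q : {ffun T -> R}) (c : R).
Hypotheses (S_gt0 : (0 < #|S|)%N) (c_gt0 : 0 < c) (QS : {in S, forall x, Q x = c}).
Let k : R := #|S|%:R.

Let k_gt0 : 0 < k. Proof. by rewrite ltr0n. Qed.

Lemma rel_entropy_const_on (P : {ffun T -> R}) :
  is_prob P -> (forall x, x \notin S -> P x = 0) ->
  rel_entropy P Q =
    (k^-1 * \sum_(x in S) (k * P x * ln (k * P x) - (k * P x - 1)) - ln (k * c))%:E.
Proof.
move=> [P_ge0 P_sum1] PS.
have P_supp : [forall x, (P x != 0) ==> (Q x != 0)].
  apply/forallP => x; apply/implyP => Px_neq0.
  have xS : x \in S by apply: contraNT Px_neq0 => /PS ->.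
  by rewrite QS // gt_eqF.
have sum_S : \sum_(x in S) P x = 1.
  by rewrite -P_sum1 [RHS](bigID (mem S)) /= [X in _ = _ + X]big1 ?addr0.
rewrite /rel_entropy P_supp (bigID (mem S)) /= [X in _ + X]big1 ?addr0; last first.
  by move=> x /PS ->; rewrite eqxx.
congr (_%:E); rewrite mulr_sumr.
rewrite (eq_bigr (fun x => k^-1 * (k * P x * ln (k * P x) - (k * P x - 1))
                           + (P x - k^-1) - P x * ln (k * c))); last first.
  move=> x xS; rewrite QS //.
  have [->|Px_neq0] := eqVneq (P x) 0; first by rewrite !(mulr0, mul0r); lra.
  have Px_pos : P x \is Num.pos by rewrite posrE lt0r Px_neq0 P_ge0.
  rewrite ln_div ?posrE // !lnM ?posrE //.
  by field; rewrite gt_eqF.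
rewrite sumrB big_split /= sumrB sum_S sumr_const -big_distrl /= sum_S.
by rewrite -mulr_natr mulVf ?gt_eqF // subrr addr0 mul1r.
Qed.

Lemma rel_entropy_unif_on : rel_entropy (unif_on R S) Q = (- ln (k * c))%:E.
Proof.
rewrite rel_entropy_const_on; last 2 first.
- exact: is_prob_unif_on.
- by move=> x /negbTE xS; rewrite ffunE xS.
rewrite big1 ?mulr0 ?sub0r // => x xS.
by rewrite ffunE xS mulfV ?gt_eqF // ln1 mulr0 subrr subr0.
Qed.

Lemma rel_entropy_unif_on_le (P : {ffun T -> R}) :
  is_prob P -> (forall x, x \notin S -> P x = 0) ->
  (rel_entropy (unif_on R S) Q <= rel_entropy P Q)%E.
Proof.
move=> P_prob PS; have [P_ge0 _] := P_prob.
rewrite rel_entropy_unif_on rel_entropy_const_on // lee_fin -subr_ge0 opprK subrK.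
apply: mulr_ge0; first by rewrite invr_ge0 ltW.
by apply: sumr_ge0 => x _; rewrite subr_ge0 xlnx_ge_subr1 // mulr_ge0 // ltW.
Qed.

Lemma rel_entropy_le_unif_on (P : {ffun T -> R}) :
  is_prob P -> (forall x, x \notin S -> P x = 0) ->
  (rel_entropy P Q <= rel_entropy (unif_on R S) Q)%E ->
  {in S, forall x, P x = k^-1}.
Proof.
move=> P_prob PS; have [P_ge0 _] := P_prob.
rewrite rel_entropy_unif_on rel_entropy_const_on // lee_fin -subr_le0 opprK subrK.
rewrite pmulr_rle0 ?invr_gt0 // => sum_le0 x xS.
have term_ge0 y : 0 <= k * P y * ln (k * P y) - (k * P y - 1).
  by rewrite subr_ge0 xlnx_ge_subr1 // mulr_ge0 // ltW.
have sum_eq0 : \sum_(y in S) (k * P y * ln (k * P y) - (k * P y - 1)) = 0.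
  by apply/eqP; rewrite eq_le sum_le0 sumr_ge0.
have /xlnx_eq_subr1 kPx : k * P x * ln (k * P x) = k * P x - 1.
  by apply/eqP; rewrite -subr_eq0; apply/eqP; apply: (psumr_eq0P _ sum_eq0).
by rewrite -[P x](mulKf (lt0r_neq0 k_gt0)) kPx ?mulr1 // mulr_ge0 // ltW.
Qed.

End RelEntropyConstOn.

Lemma marginal_eq0 (R : numDomainType) n N (P : {ffun path_t n N -> R}) t
    (x : path_t n N) :
  (forall y, 0 <= P y) -> marginal P t (x t) = 0 -> P x = 0.
Proof. by move=> P_ge0 /psumr_eq0P; apply=> // y _; apply: P_ge0. Qed.

Lemma bridge_feasible_ends (R : numDomainType) n N (P : {ffun path_t n N -> R})
    (x : path_t n N) :
  bridge_feasible P -> P x != 0 -> (x ord0 == ord0) && (x ord_max == ord_max).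
Proof.
move=> [[P_ge0 _] [marg0 margN]]; apply: contraNT; rewrite negb_and => /orP[] x_end.
- by apply/eqP/(marginal_eq0 (t := ord0) P_ge0); rewrite marg0 (negbTE x_end).
- by apply/eqP/(marginal_eq0 (t := ord_max) P_ge0); rewrite margN (negbTE x_end).
Qed.

Lemma marginal_unif_on (R : numFieldType) n N (S : {set path_t n N}) t (i0 i : 'I_n.+1) :
  (0 < #|S|)%N -> {in S, forall x : path_t n N, x t = i0} ->
  marginal (unif_on R S) t i = (i == i0)%:R.
Proof.
move=> S_gt0 S_t; have [_ sum1] := is_prob_unif_on R S_gt0.
rewrite /marginal; have [->|i_neq] := eqVneq i i0.
  rewrite mulr1n -sum1 [RHS](bigID (fun x : path_t n N => x t == i0)) /=.
  rewrite [X in _ = _ + X]big1 ?addr0 // => x.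
  by rewrite ffunE; case: ifP => // /S_t ->; rewrite eqxx.
rewrite big1 // => x /eqP xt; rewrite ffunE; case: ifP => // /S_t.
by rewrite xt => i_eq; rewrite i_eq eqxx in i_neq.
Qed.

Lemma bridge_feasible_unif_on (R : numFieldType) n N (S : {set path_t n N}) :
  (0 < #|S|)%N -> {in S, forall x : path_t n N, x ord0 = ord0 /\ x ord_max = ord_max} ->
  bridge_feasible (unif_on R S).
Proof.
move=> S_gt0 S_end; split; first exact: is_prob_unif_on.
by split=> i; apply: marginal_unif_on => // x /S_end[].
Qed.

Lemma walks_ends (R : pzSemiRingType) n N (A : 'M[R]_n.+1) (i j : 'I_n.+1) :
  {in walks N A i j, forall x : path_t n N, x ord0 = i /\ x ord_max = j}.
Proof. by move=> x; rewrite inE => /and3P[/eqP ? /eqP ? _]. Qed.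

Section RuelleBowenBridge.
Variables (R : realType) (n N : nat) (A : 'M[R]_n.+1) (lam : R) (u v : 'cV[R]_n.+1).
Hypotheses (adjA : is_adjacency A) (v_neq0 : forall i, v i 0 != 0).

Lemma M_RB_walks (i j : 'I_n.+1) :
  {in walks N A i j, forall x, M_RB N A lam u v x = u i 0 * v j 0 / lam ^+ N}.
Proof.
move=> x; rewrite inE => /and3P[/eqP x0 /eqP xN walk_x].
by rewrite M_RBE // path_weight_adjacency // walk_x x0 xN mulr1.
Qed.

Lemma bridge_feasible_supp_walks (P : {ffun path_t n N -> R}) :
  bridge_feasible P -> rel_entropy P (M_RB N A lam u v) != +oo%E ->
  forall x, x \notin walks N A ord0 ord_max -> P x = 0.
Proof.
move=> P_feas P_fin x; apply: contraNeq => Px_neq0.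
have /andP[/eqP x0 /eqP xN] := bridge_feasible_ends P_feas Px_neq0.
have := rel_entropy_supp P_fin Px_neq0.
rewrite M_RBE // path_weight_adjacency // inE x0 xN !eqxx /=.
by apply: contraNT => /negbTE ->; rewrite mulr0.
Qed.

End RuelleBowenBridge.

Theorem proposition5p4 (R : realType) (n N : nat) (A : 'M[R]_n.+1)
  (lam : R) (u v : 'cV[R]_n.+1) :
  is_adjacency A -> strongly_connected A -> aperiodic A ->
  A ord_max ord_max = 1 ->
  (1 <= N)%N -> (forall i j, 0 < (A ^+ N) i j) ->
  (forall i, 0 < u i 0) -> (forall i, 0 < v i 0) ->
  A^T *m u = lam *: u -> A *m v = lam *: v ->
  \sum_(i < n.+1) u i 0 * v i 0 = 1 ->
  (exists P, is_bridge_minimizer (M_RB N A lam u v) P) /\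
  (forall P, is_bridge_minimizer (M_RB N A lam u v) P ->
     forall x : path_t n N, feasible_path A x ->
       P x = ((A ^+ N) ord0 ord_max)^-1).
Proof.
(* Only c := u_1 v_n / lam^N > 0 matters; the remaining hypotheses just make
   M_RB the Ruelle-Bowen Markov measure. *)
move=> adjA _ _ _ _ AN_gt0 u_gt0 v_gt0 _ Av _.
have v_neq0 i : v i 0 != 0 by exact: lt0r_neq0.
set M := M_RB N A lam u v; set W := walks N A ord0 ord_max.
have cardW : #|W|%:R = (A ^+ N) ord0 ord_max := card_walks N ord0 ord_max adjA.
have W_gt0 : (0 < #|W|)%N by rewrite -(ltr0n R) cardW.
have c_gt0 : 0 < u ord0 0 * v ord_max 0 / lam ^+ N.
  rewrite !mulr_gt0 ?invr_gt0 //.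
  by apply: (eigenvalue_gt0 AN_gt0 v_gt0); apply: mulmx_exp_eigen.
have MW : {in W, forall x, M x = u ord0 0 * v ord_max 0 / lam ^+ N}.
  exact: M_RB_walks.
have U_feas : bridge_feasible (unif_on R W).
  by apply: bridge_feasible_unif_on => //; exact: walks_ends.
have P_supp := bridge_feasible_supp_walks adjA v_neq0.
split.
  exists (unif_on R W); split=> // P P_feas.
  have [->|P_fin] := eqVneq (rel_entropy P M) +oo%E; first exact: leey.
  apply: (rel_entropy_unif_on_le W_gt0 c_gt0 MW); last exact: P_supp P_feas P_fin.
  by case: P_feas.
move=> P [P_feas P_min] x [x0 [xN walk_x]].
have P_fin : rel_entropy P M != +oo%E.
  have := P_min _ U_feas; rewrite (rel_entropy_unif_on W_gt0 c_gt0 MW).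
  by apply: contraTneq => ->; rewrite leye_eq.
have [[P_prob _] xW] : bridge_feasible P /\ x \in W.
  by split=> //; rewrite inE x0 xN !eqxx; apply/forallP => t; rewrite walk_x.
rewrite -cardW; apply: (rel_entropy_le_unif_on W_gt0 c_gt0 MW P_prob) => //.
  exact: P_supp P_feas P_fin.
exact: P_min.
Qed.
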